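(* Let $k\ge 2$ and let $P\subset\mathbb{R}^k$ be a finite point set with properties $a_1,\dots,a_k\colon P\to\{-1,1\}$, each strictly linearly separable on $P$, such that all $2^k$ possible labels occur in $P$. For $i=2,\dots,k$ let $H_i$ be a hyperplane strictly separating $P^i_-$ from $P^i_+$, with normal $v_i$. Then for every unit vector $w\in\mathbb{R}^k$ with $w\cdot v_i=0$ for all $i=2,\dots,k$, the projected sets $P'_-$ and $P'_+$ are not strictly linearly separable in $w^\perp$.
   Context: $P^i_{\pm}=\{p\in P: a_i(p)=\pm1\}$, $P_\pm=P^1_\pm$; the label of $p$ is $(a_1(p),\dots,a_k(p))$. Projection along a unit vector $w$: $p'=p-(p\cdot w)w$, and $X'$ denotes the image of $X$. Finite sets $X,Y$ in a linear subspace $L$ are strictly linearly separable (in $L$) if there exist a unit $v\in L$ and $c\in\mathbb{R}$ with $v\cdot x<c<v\cdot y$ for all $x\in X$, $y\in Y$. *)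

From HB Require Import structures.
From mathcomp Require Import all_boot all_order all_algebra.
From mathcomp Require Import reals.
Set Implicit Arguments. Unset Strict Implicit. Unset Printing Implicit Defensive.
Import Order.TTheory GRing.Theory Num.Theory.
Local Open Scope ring_scope.

Definition dot (R : realType) (k : nat) (u v : 'rV[R]_k) : R :=
  \sum_(i < k) u 0 i * v 0 i.

Definition proj (R : realType) (k : nat) (w p : 'rV[R]_k) : 'rV[R]_k :=
  p - (dot p w) *: w.

(* X and Y (finite sets, given as sequences) are strictly linearly separable
   in the linear subspace L (given as a predicate on R^k):
   some unit v in L and c with v.x < c < v.y for all x in X, y in Y. *)
Definition strict_lin_sep (R : realType) (k : nat) (L : 'rV[R]_k -> Prop)
  (X Y : seq 'rV[R]_k) : Prop :=
  exists (v : 'rV[R]_k) (c : R),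
    [/\ L v, dot v v = 1,
        (forall x, x \in X -> dot v x < c) &
        (forall y, y \in Y -> c < dot v y)].

(* P^i_- and P^i_+ ; properties are int-valued, index i : 'I_k (i = 0 is a_1) *)
Definition Pminus (R : realType) (k : nat) (a : 'I_k -> 'rV[R]_k -> int)
  (P : seq 'rV[R]_k) (i : 'I_k) : seq 'rV[R]_k :=
  [seq p <- P | a i p == -1].
Definition Pplus (R : realType) (k : nat) (a : 'I_k -> 'rV[R]_k -> int)
  (P : seq 'rV[R]_k) (i : 'I_k) : seq 'rV[R]_k :=
  [seq p <- P | a i p == 1].

Definition hyperplane_strictly_separates (R : realType) (k : nat)
  (v : 'rV[R]_k) (c : R) (X Y : seq 'rV[R]_k) : Prop :=
  v != 0 /\
  (((forall x, x \in X -> dot v x < c) /\ (forall y, y \in Y -> c < dot v y)) \/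
   ((forall x, x \in X -> c < dot v x) /\ (forall y, y \in Y -> dot v y < c))).

From HB Require Import structures.
From mathcomp Require Import all_boot all_order all_algebra.
From mathcomp Require Import reals.
Import Order.TTheory GRing.Theory Num.Theory.
Local Open Scope ring_scope.

(* Suppose the projections of P_- and P_+ were strictly
   separated inside w^perp by (u, c_1).  Since u is orthogonal to w and
   dot u (proj w p) = dot u p, the functional p |-> u.p - c_1 then separates
   P_- from P_+ in R^k itself.  Orienting each hyperplane H_i (i >= 2) so that
   P^i_- lies below it gives k affine functionals h_i(p) = u_i.p - c_i whose
   sign on P is exactly the label a_i.  Their linear parts u_1, ..., u_k are
   k vectors of R^k all orthogonal to w <> 0, hence linearly dependent:
   sum_i x_i u_i = 0 for some x <> 0, so sum_i x_i h_i is constant.  But since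
   all 2^k labels occur, there are points of P where every x_i h_i is
   >= 0 (and one is > 0), and points where every x_i h_i is <= 0 (one < 0):
   a nontrivial combination of functionals realizing all sign patterns cannot
   be constant. *)

Section SignPatterns.
Context {R : realDomainType} {I : finType}.

Lemma signed_term_gt0 {m g : R} :
  m != 0 -> (if 0 <= m then 0 < g else g < 0) -> 0 < m * g.
Proof.
move=> m_neq0; case: ifPn => [m_ge0 g_gt0|].
  by rewrite mulr_gt0 // lt_neqAle eq_sym m_neq0.
by rewrite -ltNge => m_lt0 g_lt0; rewrite nmulr_rgt0.
Qed.

Lemma signed_sum_gt0 {mu g : I -> R} {j : I} : mu j != 0 ->
  (forall i, if 0 <= mu i then 0 < g i else g i < 0) ->
  0 < \sum_i mu i * g i.
Proof.
move=> muj_neq0 g_sign; rewrite (bigD1 j) //=.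
apply: (lt_le_trans (signed_term_gt0 muj_neq0 (g_sign j))).
rewrite lerDl; apply: sumr_ge0 => i _.
have [->|mui_neq0] := eqVneq (mu i) 0; first by rewrite mul0r.
exact/ltW/signed_term_gt0.
Qed.

(* A nontrivial linear combination of functions that realize every strict
   sign pattern is never constant: evaluate it where the signs of the h_i
   agree with those of mu, and where they are all opposite. *)
Lemma sign_patterns_nonconstant {T : Type} {h : I -> T -> R}
    {mu : I -> R} {C : R} :
  (forall s : I -> bool,
     exists p, forall i, if s i then 0 < h i p else h i p < 0) ->
  (exists j, mu j != 0) -> ~ (forall p, \sum_i mu i * h i p = C).
Proof.
move=> patterns [j muj_neq0] constC.
have [p1 sign1] := patterns (fun i => 0 <= mu i).
have [p2 sign2] := patterns (fun i => ~~ (0 <= mu i)).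
have C_gt0 : 0 < C.
  by rewrite -(constC p1); exact: (signed_sum_gt0 (g := h^~ p1) muj_neq0).
have C_lt0 : C < 0.
  rewrite -(constC p2) -oppr_gt0 -sumrN; under eq_bigr do rewrite -mulrN.
  apply: (signed_sum_gt0 (g := fun i => - h i p2) muj_neq0) => i.
  move: (sign2 i).
  by case: (0 <= mu i); rewrite /= ?oppr_gt0 ?oppr_lt0.
by move: (lt_trans C_lt0 C_gt0); rewrite ltxx.
Qed.

End SignPatterns.

Lemma dotC {R : realType} {k : nat} (u v : 'rV[R]_k) : dot u v = dot v u.
Proof. by apply: eq_bigr => i _; rewrite mulrC. Qed.

Lemma dotZl {R : realType} {k : nat} (s : R) (u v : 'rV[R]_k) :
  dot (s *: u) v = s * dot u v.
Proof. by rewrite /dot mulr_sumr; apply: eq_bigr => i _; rewrite mxE mulrA. Qed.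

Lemma dot_proj {R : realType} {k : nat} {u w : 'rV[R]_k} (p : 'rV[R]_k) :
  dot u w = 0 -> dot u (proj w p) = dot u p.
Proof.
move=> uw0; rewrite /proj /dot.
under eq_bigr do rewrite !mxE mulrBr.
rewrite sumrB; under [X in _ - X]eq_bigr do rewrite mulrCA.
by rewrite -big_distrr /= -/(dot u w) uw0 mulr0 subr0.
Qed.

Lemma orthogonal_family_dependent {R : realType} {k : nat}
    {r : 'I_k -> 'rV[R]_k} {w : 'rV[R]_k} :
  w != 0 -> (forall i, dot (r i) w = 0) ->
  exists2 x : 'I_k -> R, exists j, x j != 0 &
    forall p, \sum_i x i * dot (r i) p = 0.
Proof.
move=> w_neq0 rw0; pose M := \matrix_i r i.
have Mw0 : M *m w^T = 0.
  apply/matrixP => i j; rewrite !mxE -[RHS](rw0 i) /dot; apply: eq_bigr => l _.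
  by rewrite !mxE (ord1 j).
have : ~~ (M \in unitmx).
  apply: contra w_neq0 => M_unit.
  by rewrite -trmx_eq0 -(mulKmx M_unit w^T) Mw0 mulmx0.
rewrite unitmxE unitfE negbK => /det0P [x x_neq0 xM0].
exists (fun i => x 0 i).
  have [j xj_neq0|x_eq0] := pickP (fun j => x 0 j != 0); first by exists j.
  case/eqP: x_neq0; apply/rowP => j; rewrite mxE.
  by apply/eqP; move/negbFE: (x_eq0 j).
move=> p; transitivity ((x *m (M *m p^T)) 0 0).
  rewrite mxE; apply: eq_bigr => i _; rewrite mxE /dot; congr (_ * _).
  by apply: eq_bigr => j _; rewrite !mxE.
by rewrite mulmxA xM0 mul0mx mxE.
Qed.

Definition separates {R : realType} {k : nat} (u : 'rV[R]_k) (c : R)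
    (X Y : seq 'rV[R]_k) : Prop :=
  (forall x, x \in X -> dot u x < c) /\ (forall y, y \in Y -> c < dot u y).

Definition orient {R : realType} {k : nat} (v : 'rV[R]_k) (c : R)
    (x0 : 'rV[R]_k) : R :=
  if dot v x0 < c then 1 else -1.

Lemma hyperplane_orient {R : realType} {k : nat} (v : 'rV[R]_k) (c : R)
    (X Y : seq 'rV[R]_k) (x0 : 'rV[R]_k) :
  x0 \in X -> hyperplane_strictly_separates v c X Y ->
  separates (orient v c x0 *: v) (orient v c x0 * c) X Y.
Proof.
rewrite /orient => x0X [_ [[X_below Y_above]|[X_above Y_below]]].
  by rewrite X_below //; split=> [x xX|y yY]; rewrite dotZl !mul1r; auto.
rewrite ltNge ltW ?X_above //=.
by split=> [x xX|y yY]; rewrite dotZl !mulN1r ltrN2; auto.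
Qed.

Lemma separates_projection {R : realType} {k : nat} (u w : 'rV[R]_k) (c : R)
    (X Y : seq 'rV[R]_k) :
  dot u w = 0 ->
  (forall x, x \in [seq proj w p | p <- X] -> dot u x < c) ->
  (forall y, y \in [seq proj w p | p <- Y] -> c < dot u y) ->
  separates u c X Y.
Proof.
move=> uw0 X_below Y_above; split=> [x xX|y yY].
- by rewrite -(dot_proj x uw0); apply: X_below; exact: map_f.
- by rewrite -(dot_proj y uw0); apply: Y_above; exact: map_f.
Qed.

Lemma separators_not_orthogonal {R : realType} {k : nat}
    {P : seq 'rV[R]_k} {a : 'I_k -> 'rV[R]_k -> int}
    (hlabels : forall s : 'I_k -> bool, exists2 p, p \in P &
       forall i, a i p = (if s i then 1 else -1))
    {u : 'I_k -> 'rV[R]_k} {c : 'I_k -> R} {w : 'rV[R]_k} :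
  w != 0 -> (forall i, dot (u i) w = 0) ->
  (forall i, separates (u i) (c i) (Pminus a P i) (Pplus a P i)) -> False.
Proof.
move=> w_neq0 uw0 usep.
have [x x_neq0 x_dep] := orthogonal_family_dependent w_neq0 uw0.
pose h i p := dot (u i) p - c i.
have patterns : forall s : 'I_k -> bool,
    exists p, forall i, if s i then 0 < h i p else h i p < 0.
  move=> s; have [p pP plab] := hlabels s; exists p => i.
  have [minus_below plus_above] := usep i.
  rewrite /h subr_gt0 subr_lt0; case: (s i) (plab i) => lab.
  - by apply: plus_above; rewrite mem_filter lab eqxx pP.
  - by apply: minus_below; rewrite mem_filter lab eqxx pP.
have constant : forall p, \sum_i x i * h i p = - \sum_i x i * c i.
  by move=> p; under eq_bigr do rewrite mulrBr; rewrite sumrB x_dep sub0r.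
exact: sign_patterns_nonconstant patterns x_neq0 constant.
Qed.

Theorem mainTheorem4 (R : realType) (k : nat) (hk : (2 <= k)%N)
  (P : seq 'rV[R]_k) (a : 'I_k -> 'rV[R]_k -> int)
  (ha : forall i p, p \in P -> a i p = 1 \/ a i p = -1)
  (hsep : forall i, strict_lin_sep (fun _ => True) (Pminus a P i) (Pplus a P i))
  (hlabels : forall s : 'I_k -> bool, exists2 p, p \in P &
       forall i, a i p = (if s i then 1 else -1))
  (v : 'I_k -> 'rV[R]_k) (c : 'I_k -> R)
  (hH : forall i : 'I_k, (0 < i)%N ->
       hyperplane_strictly_separates (v i) (c i) (Pminus a P i) (Pplus a P i))
  (w : 'rV[R]_k) (hw : dot w w = 1)
  (hwv : forall i : 'I_k, (0 < i)%N -> dot w (v i) = 0) :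
  ~ strict_lin_sep (fun u => dot u w = 0)
      [seq proj w p | p <- Pminus a P (Ordinal (leq_trans (isT : (0 < 2)%N) hk))]
      [seq proj w p | p <- Pplus a P (Ordinal (leq_trans (isT : (0 < 2)%N) hk))].
Proof.
move=> [u [c1 [uw0 _ X_below Y_above]]].
set i0 := Ordinal _ in X_below Y_above.
have w_neq0 : w != 0.
  apply/eqP => w0; move: hw; rewrite w0 /dot big1 => [/eqP|i _].
    by rewrite eq_sym oner_eq0.
  by rewrite mxE mul0r.
(* The first functional is the assumed separator u (orthogonal to w); the
   others are the hyperplanes H_i, oriented by the point q of P whose labels
   are all -1. *)
have [q qP q_minus] := hlabels (fun _ => false).
pose u_ i := if val i == 0%N then u else orient (v i) (c i) q *: v i.
pose c_ i := if val i == 0%N then c1 else orient (v i) (c i) q * c i.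
apply: (separators_not_orthogonal hlabels (u := u_) (c := c_) w_neq0) => i;
  rewrite /u_ /c_; case: eqP => [i_eq0|/eqP i_neq0].
- exact: uw0.
- by rewrite dotZl dotC hwv ?lt0n ?mulr0.
- have -> : i = i0 by exact: val_inj.
  exact: separates_projection uw0 X_below Y_above.
- apply: hyperplane_orient; last by apply: hH; rewrite lt0n.
  by rewrite mem_filter q_minus eqxx.
Qed.
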